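(* There is an absolute constant $C$ such that for all integers $b\ge 0$ and $p\ge 1$, with $n=2^b$, there is an arithmetic circuit using at most $C\,p\binom{n}{\downarrow p}$ $\oplus$-gates that, for every commutative monoid $(S,\oplus,0)$ and every $f:\binom{[n]}{\downarrow p}\to S$, computes for every $y\in[n]$ the value $e(y)=\bigoplus_{X\in\binom{[n]}{\downarrow p},\ y\notin X} f(X)$. (In particular, taking $f(X)=0$ for $|X|<p$, this solves $(p,1)$-disjoint summation.)
   Context: $\binom{[n]}{\downarrow p}$ is the family of subsets of $[n]=\{1,\dots,n\}$ of size at most $p$, and $\binom{n}{\downarrow p}=\sum_{i=0}^{p}\binom{n}{i}$. An arithmetic circuit consists of input gates (one per $X$, evaluating to $f(X)$), constant gates evaluating to $0$, and binary $\oplus$-gates, with designated output gates (one per $y$); gate count refers to the number of $\oplus$-gates. *)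

From HB Require Import structures.
From mathcomp Require Import all_boot all_order all_algebra.
Set Implicit Arguments. Unset Strict Implicit. Unset Printing Implicit Defensive.
Import GRing.Theory.
Local Open Scope ring_scope.

Definition binom_down (n p : nat) : nat := (\sum_(i < p.+1) 'C(n, i))%N.

Definition in_family (n p : nat) (X : {set 'I_n}) : bool := (#|X| <= p)%N.

(* Gates of an arithmetic circuit whose inputs are indexed by subsets of 'I_n.
   Gates are stored in a list; GAdd i j refers to earlier gates i, j (by position). *)
Inductive gate (n : nat) : Type :=
| GIn of {set 'I_n}
| GZero
| GAdd of nat & nat.

Record circuit (n : nat) : Type := Circuit {
  gates : seq (gate n);
  outs  : 'I_n -> nat
}.

Definition is_add n (g : gate n) : bool := if g is GAdd _ _ then true else false.

Definition gate_count n (c : circuit n) : nat := count (@is_add n) (gates c).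

Definition gate_ok n p (k : nat) (g : gate n) : bool :=
  match g with
  | GIn X => in_family p X
  | GZero => true
  | GAdd i j => (i < k)%N && (j < k)%N
  end.

Definition circuit_wf n p (c : circuit n) : Prop :=
  (forall k, (k < size (gates c))%N -> gate_ok p k (nth (GZero n) (gates c) k))
  /\ (forall y, (outs c y < size (gates c))%N).

(* evaluation in a commutative monoid S (nmodType = commutative additive monoid) *)
Definition eval_step n (S : nmodType) (f : {set 'I_n} -> S) (acc : seq S) (g : gate n) : seq S :=
  rcons acc (match g with
             | GIn X => f X
             | GZero => 0
             | GAdd i j => nth 0 acc i + nth 0 acc j
             end).

Definition gate_values n (S : nmodType) (f : {set 'I_n} -> S) (c : circuit n) : seq S :=
  foldl (eval_step f) [::] (gates c).

Definition output_value n (S : nmodType) (f : {set 'I_n} -> S) (c : circuit n) (y : 'I_n) : S :=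
  nth 0 (gate_values f c) (outs c y).

(* For p >= 2 we use divide and conquer on blocks D of the ground set.  The
   invariant is that for every A \subset D with #|A| <= p some gate computes
   the trace sum of A on D (the sum of f over the members X with X :&: D = A).
   Splitting D into halves DL, DR, the trace sums on DL are sums of trace sums
   on D, one addition per member of the family of D; likewise for DR.  We
   recurse on both halves; on a singleton {y} the trace sum of set0 is e(y).
   Starting from the input gates (the trace sums on [n]), the total cost
   satisfies c(2m) = 2 binom_down(2m, p) + 2 c(m), which is at most
   8 binom_down n p since the binomials of level >= 2 at least quadruple when
   the ground set doubles.  For p = 1 this recursion costs n log n, so instead
   e(y) = f(set0) + (sum of f{x}, x < y) + (sum of f{x}, x > y) is computed
   from running sums from the left and from the right, with 3n additions. *)

From HB Require Import structures.
From mathcomp Require Import all_boot all_order all_algebra.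
From mathcomp Require Import zify.
Import GRing.Theory.
Set Implicit Arguments. Unset Strict Implicit. Unset Printing Implicit Defensive.
Local Open Scope ring_scope.

Section GateLists.
Variables (n p : nat).
Implicit Types (gs : seq (gate n)) (c : nat).

(* A formal sum: a value defined uniformly in every commutative monoid from
   the inputs f. Circuits are specified by the formal sums their gates compute. *)
Definition form := forall S : nmodType, ({set 'I_n} -> S) -> S.

Definition gate_value (S : nmodType) (f : {set 'I_n} -> S) (vs : seq S) (g : gate n) : S :=
  match g with
  | GIn X => f X
  | GZero => 0
  | GAdd i j => nth 0 vs i + nth 0 vs j
  end.

Definition vals (S : nmodType) (f : {set 'I_n} -> S) gs : seq S :=
  foldl (eval_step f) [::] gs.

Lemma vals_rcons (S : nmodType) (f : {set 'I_n} -> S) gs g :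
  vals f (rcons gs g) = rcons (vals f gs) (gate_value f (vals f gs) g).
Proof. by rewrite /vals -cats1 foldl_cat. Qed.

Lemma size_vals (S : nmodType) (f : {set 'I_n} -> S) gs : size (vals f gs) = size gs.
Proof. by elim/last_ind: gs => [|gs g IH] //; rewrite vals_rcons !size_rcons IH. Qed.

Lemma nth_vals_cat (S : nmodType) (f : {set 'I_n} -> S) gs e i :
  (i < size gs)%N -> nth 0 (vals f (gs ++ e)) i = nth 0 (vals f gs) i.
Proof.
move=> lt_i; elim/last_ind: e => [|e g IH]; first by rewrite cats0.
by rewrite -rcons_cat vals_rcons nth_rcons size_vals size_cat ltn_addr.
Qed.

Definition gs_ok gs : Prop :=
  forall k, (k < size gs)%N -> gate_ok p k (nth (GZero n) gs k).

Definition Ext gs gs' c : Prop :=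
  exists e, [/\ gs' = gs ++ e, (count (@is_add n) e <= c)%N & gs_ok gs -> gs_ok gs'].

Lemma Ext_refl gs : Ext gs gs 0.
Proof. by exists [::]; rewrite cats0. Qed.

Lemma Ext_trans gs1 gs2 gs3 c1 c2 c :
  Ext gs1 gs2 c1 -> Ext gs2 gs3 c2 -> (c1 + c2 <= c)%N -> Ext gs1 gs3 c.
Proof.
move=> [e1 [-> cnt1 ok1]] [e2 [-> cnt2 ok2]] le_c.
exists (e1 ++ e2); split; [by rewrite catA | | by move=> /ok1 /ok2].
by rewrite count_cat (leq_trans _ le_c) ?leq_add.
Qed.

Lemma Ext_weaken gs gs' c c' : Ext gs gs' c -> (c <= c')%N -> Ext gs gs' c'.
Proof. by move=> E le_c; apply: Ext_trans E (Ext_refl gs') _; rewrite addn0. Qed.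

Lemma Ext_rcons gs g :
  gate_ok p (size gs) g -> Ext gs (rcons gs g) (is_add g).
Proof.
move=> ok_g; exists [:: g]; split; rewrite ?cats1 /= ?addn0 // => ok_gs k.
rewrite size_rcons ltnS leq_eqVlt nth_rcons => /orP[/eqP->|lt_k].
  by rewrite ltnn eqxx.
by rewrite lt_k ok_gs.
Qed.

Definition computes gs k (F : form) : Prop :=
  (k < size gs)%N /\ forall (S : nmodType) (f : {set 'I_n} -> S), nth 0 (vals f gs) k = F S f.

Lemma computes_ext gs gs' c k F : Ext gs gs' c -> computes gs k F -> computes gs' k F.
Proof.
move=> [e [-> _ _]] [lt_k val_k]; split=> [|S f]; last by rewrite nth_vals_cat.
by rewrite size_cat ltn_addr.
Qed.

Lemma computes_eq gs k (F F' : form) :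
  (forall S f, F S f = F' S f) -> computes gs k F -> computes gs k F'.
Proof. by move=> eqF [lt_k val_k]; split=> // S f; rewrite val_k eqF. Qed.

Lemma zero_gate gs : exists gs' k, Ext gs gs' 0 /\ computes gs' k (fun S f => 0).
Proof.
exists (rcons gs (GZero n)), (size gs); split; first exact: Ext_rcons.
split=> [|S f]; first by rewrite size_rcons.
by rewrite vals_rcons nth_rcons size_vals ltnn eqxx.
Qed.

Lemma add_gate gs i j (F G : form) : computes gs i F -> computes gs j G ->
  exists gs' k, Ext gs gs' 1 /\ computes gs' k (fun S f => F S f + G S f).
Proof.
move=> [lt_i val_i] [lt_j val_j].
exists (rcons gs (GAdd n i j)), (size gs); split; first by apply: Ext_rcons; rewrite /= lt_i.
split=> [|S f]; first by rewrite size_rcons.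
by rewrite vals_rcons nth_rcons size_vals ltnn eqxx /= val_i val_j.
Qed.

Lemma sum_gates (I : eqType) (l : seq I) (k : I -> nat) (F : I -> form) gs :
  (forall i, i \in l -> computes gs (k i) (F i)) ->
  exists gs' k', Ext gs gs' (size l) /\
    computes gs' k' (fun S f => \sum_(i <- l) F i S f).
Proof.
elim: l gs => [|i l IH] gs comp_l.
  have [gs' [k' [E comp0]]] := zero_gate gs.
  by exists gs', k'; split=> //; apply: computes_eq comp0 => S f; rewrite big_nil.
have [|gs1 [k1 [E1 comp1]]] := IH gs.
  by move=> j l_j; apply: comp_l; rewrite inE l_j orbT.
have comp_i := computes_ext E1 (comp_l i (mem_head i l)).
have [gs' [k' [E comp']]] := add_gate comp_i comp1.
exists gs', k'; split; first by apply: Ext_trans E1 E _; rewrite addn1.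
by apply: computes_eq comp' => S f; rewrite big_cons.
Qed.

Lemma prefix_sums (I : eqType) (l : seq I) (k : I -> nat) (F : I -> form) a F0 gs :
  computes gs a F0 -> (forall i, i \in l -> computes gs (k i) (F i)) ->
  exists gs' (P : nat -> nat), Ext gs gs' (size l) /\
    forall t, (t <= size l)%N ->
      computes gs' (P t) (fun S f => F0 S f + \sum_(i <- take t l) F i S f).
Proof.
elim: l a F0 gs => [|i l IH] a F0 gs comp_a comp_l.
  exists gs, (fun _ => a); split=> [|t _]; first exact: Ext_refl.
  by apply: computes_eq comp_a => S f; rewrite big_nil addr0.
have [gs1 [a1 [E1 comp_a1]]] := add_gate comp_a (comp_l i (mem_head i l)).
have [|gs' [P [E comp_P]]] := IH a1 _ gs1 comp_a1.
  by move=> j l_j; apply: computes_ext E1 (comp_l j _); rewrite inE l_j orbT.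
exists gs', (fun t => if t is t'.+1 then P t' else a); split.
  by apply: Ext_trans E1 E _; rewrite add1n.
case=> [|t] le_t.
  by apply: computes_eq (computes_ext E (computes_ext E1 comp_a)) => S f; rewrite big_nil addr0.
by apply: computes_eq (comp_P t le_t) => S f; rewrite /= big_cons addrA.
Qed.

Lemma suffix_sums (I : eqType) (l : seq I) (k : I -> nat) (F : I -> form) gs :
  (forall i, i \in l -> computes gs (k i) (F i)) ->
  exists gs' (Q : nat -> nat), Ext gs gs' (size l) /\
    forall t, (t <= size l)%N -> computes gs' (Q t) (fun S f => \sum_(i <- drop t l) F i S f).
Proof.
elim: l gs => [|i l IH] gs comp_l.
  have [gs' [k' [E comp0]]] := zero_gate gs.
  exists gs', (fun _ => k'); split=> // t _.
  by apply: computes_eq comp0 => S f; rewrite big_nil.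
have [|gs1 [Q [E1 comp_Q]]] := IH gs.
  by move=> j l_j; apply: comp_l; rewrite inE l_j orbT.
have comp_i := computes_ext E1 (comp_l i (mem_head i l)).
have [gs' [k' [E comp']]] := add_gate comp_i (comp_Q 0%N isT).
exists gs', (fun t => if t is t'.+1 then Q t' else k'); split.
  by apply: Ext_trans E1 E _; rewrite addn1.
case=> [|t] le_t; first by apply: computes_eq comp' => S f; rewrite drop0 big_cons.
exact: computes_ext E (comp_Q t le_t).
Qed.

Lemma each_key (T : eqType) (keys : seq T) (F : T -> form) (cost : T -> nat) gs0 :
  (forall gs c A, A \in keys -> Ext gs0 gs c ->
     exists gs' k, Ext gs gs' (cost A) /\ computes gs' k (F A)) ->
  exists gs' (out : T -> nat), Ext gs0 gs' (\sum_(A <- keys) cost A) /\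
    forall A, A \in keys -> computes gs' (out A) (F A).
Proof.
elim: keys gs0 => [|A keys IH] gs0 step.
  by exists gs0, (fun _ => 0%N); rewrite big_nil; split; [exact: Ext_refl|].
have [gs1 [k [E1 comp_k]]] := step gs0 0%N A (mem_head A keys) (Ext_refl gs0).
have [|gs' [out [E comp_out]]] := IH gs1.
  move=> gs c B B_keys E'; apply: step (Ext_trans E1 E' (leqnn _)).
  by rewrite inE B_keys orbT.
exists gs', (fun B => if B == A then k else out B); split.
  by apply: Ext_trans E1 E _; rewrite big_cons.
move=> B; rewrite inE; case: eqP => [-> _ | _ /= B_keys]; last exact: comp_out.
exact: computes_ext E comp_k.
Qed.

Lemma input_layer (l : seq {set 'I_n}) : (forall X, X \in l -> in_family p X) ->
  Ext [::] (map (@GIn n) l) 0 /\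
  forall X, X \in l -> computes (map (@GIn n) l) (index X l) (fun S f => f X).
Proof.
move=> fam_l; split.
  exists (map (@GIn n) l); split=> // [|_ k]; first by elim: l {fam_l}.
  by rewrite size_map => lt_k; rewrite (nth_map set0) //= fam_l ?mem_nth.
have vals_l (S : nmodType) (f : {set 'I_n} -> S) : vals f (map (@GIn n) l) = map f l.
  by elim/last_ind: l {fam_l} => [|l X IH] //; rewrite !map_rcons vals_rcons IH.
move=> X l_X; split=> [|S f]; first by rewrite size_map index_mem.
by rewrite vals_l (nth_map set0) ?index_mem ?nth_index.
Qed.

Lemma circuit_of gs (out : 'I_n -> nat) c (F : 'I_n -> form) :
  Ext [::] gs c -> (forall y, computes gs (out y) (F y)) ->
  [/\ circuit_wf p (Circuit gs out), (gate_count (Circuit gs out) <= c)%N &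
      forall (S : nmodType) (f : {set 'I_n} -> S) y,
        output_value f (Circuit gs out) y = F y S f].
Proof.
move=> [e [-> cnt ok]] comp_out; split=> //.
  by split=> [|y]; [apply: ok => k | exact: (comp_out y).1].
by move=> S f y; apply: (comp_out y).2.
Qed.

End GateLists.

Section Traces.
Variables (n p : nat).
Implicit Types (D DL DR A B X : {set 'I_n}).

Definition family_in D : {set {set 'I_n}} :=
  [set A : {set 'I_n} | (A \subset D) && (#|A| <= p)%N].

Definition extensions D A : {set {set 'I_n}} :=
  [set B : {set 'I_n} | (B \subset D) && (#|A :|: B| <= p)%N].

Definition trace_sum D A : form n :=
  fun S f => \sum_(X | in_family p X && (X :&: D == A)) f X.
Arguments trace_sum D A S f : clear implicits.

Definition avoid_sum (y : 'I_n) : form n :=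
  fun S f => \sum_(X | in_family p X && (y \notin X)) f X.
Arguments avoid_sum y S f : clear implicits.

Lemma card_family_in D : #|family_in D| = binom_down #|D| p.
Proof.
rewrite /binom_down -sum1_card.
rewrite (partition_big (fun X => inord #|X| : 'I_p.+1) xpredT) //=.
apply: eq_bigr => k _; rewrite -cards_draws -sum1_card; apply: eq_bigl => X.
rewrite !inE; case: (X \subset D) => //=.
case: (leqP #|X| p) => [le_X | lt_X]; first by rewrite -val_eqE /= inordK.
by apply/esym/negbTE; apply: contraTneq lt_X => ->; rewrite -leqNgt -ltnS.
Qed.

Lemma trace_split DL DR A B X : [disjoint DL & DR] -> A \subset DL -> B \subset DR ->
  (X :&: (DL :|: DR) == A :|: B) = (X :&: DL == A) && (X :&: DR == B).
Proof.
move=> dis sA sB; apply/eqP/andP => [eqX | [/eqP <- /eqP <-]]; last by rewrite setIUr.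
have trX (E : {set 'I_n}) : E \subset DL :|: DR -> X :&: E = (A :|: B) :&: E.
  by move=> sE; rewrite -eqX -setIA (setIidPr sE).
have AR0 : A :&: DR = set0 by apply/disjoint_setI0/(disjointWl sA).
have BL0 : B :&: DL = set0 by apply/disjoint_setI0/(disjointWl sB); rewrite disjoint_sym.
by rewrite !trX ?subsetUl ?subsetUr // !setIUl AR0 BL0 (setIidPl sA) (setIidPl sB) setU0 set0U.
Qed.

Lemma trace_sum_split DL DR A (S : nmodType) (f : {set 'I_n} -> S) :
  [disjoint DL & DR] -> A \subset DL ->
  trace_sum DL A S f = \sum_(B in extensions DR A) trace_sum (DL :|: DR) (A :|: B) S f.
Proof.
move=> dis sA; rewrite /trace_sum.
rewrite (partition_big (fun X => X :&: DR) (mem (extensions DR A))) /=.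
  apply: eq_bigr => B; rewrite inE => /andP [sB _].
  by apply: eq_bigl => X; rewrite trace_split // andbA.
move=> X /andP [fam_X /eqP trX]; rewrite inE subsetIr /= -trX -setIUr.
by apply: leq_trans fam_X; apply/subset_leq_card/subsetIl.
Qed.

Lemma card_family_split DL DR : [disjoint DL & DR] ->
  (\sum_(A in family_in DL) #|extensions DR A|)%N = #|family_in (DL :|: DR)|.
Proof.
move=> dis; rewrite -sum1_card.
rewrite [RHS](partition_big (fun X => X :&: DL) (mem (family_in DL))) /=; last first.
  move=> X; rewrite inE => /andP [sX le_X]; rewrite inE subsetIr /=.
  by apply: leq_trans le_X; apply/subset_leq_card/subsetIl.
apply: eq_bigr => A; rewrite inE => /andP [sA _].
rewrite -sum1_card [RHS](reindex_onto (fun B => A :|: B) (fun X => X :&: DR)) /=.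
  apply: eq_bigl => B; rewrite !inE; apply/idP/idP => [/andP [sB le_AB] | ].
    have sAB : A :|: B \subset DL :|: DR by apply: setUSS.
    by rewrite sAB le_AB /= -trace_split // (setIidPl sAB).
  by move=> /andP [/andP [/andP [_ ->] _] /eqP <-]; rewrite subsetIr.
move=> X; rewrite inE => /andP [/andP [sX _] /eqP <-].
by rewrite -setIUr (setIidPl sX).
Qed.

Lemma trace_sum_setT A (S : nmodType) (f : {set 'I_n} -> S) :
  in_family p A -> trace_sum [set: 'I_n] A S f = f A.
Proof.
move=> fam_A; rewrite /trace_sum (eq_bigl (pred1 A)) ?big_pred1_eq // => X.
by rewrite setIT /=; case: eqP => [-> | _]; rewrite ?andbT ?andbF.
Qed.

Lemma trace_sum_set1 (y : 'I_n) (S : nmodType) (f : {set 'I_n} -> S) :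
  trace_sum [set y] set0 S f = avoid_sum y S f.
Proof.
by apply: eq_bigl => X; rewrite setI_eq0 disjoint_sym disjoints1.
Qed.

End Traces.
Arguments trace_sum {n} p D A S f.
Arguments avoid_sum {n} p y S f.

Lemma halve_set (T : finType) (D : {set T}) h : #|D| = (2 * h)%N ->
  exists DL DR : {set T}, [/\ [disjoint DL & DR], D = DL :|: DR, #|DL| = h & #|DR| = h].
Proof.
move=> card_D; set DL := [set x in take h (enum D)].
have sDL : DL \subset D by apply/subsetP => x; rewrite inE => /mem_take; rewrite mem_enum.
have card_DL : #|DL| = h.
  rewrite cardsE (card_uniqP (take_uniq _ (enum_uniq _))) size_takel //.
  by rewrite -cardE card_D leq_pmull.
exists DL, (D :\: DL); split.
- by rewrite disjoints_subset; apply/subsetP => x DL_x; rewrite in_setC in_setD DL_x.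
- by rewrite -{1}(setID D DL) (setIidPr sDL).
- exact: card_DL.
- by rewrite cardsD (setIidPr sDL) card_DL card_D; lia.
Qed.

Section Cost.
Local Open Scope nat_scope.

(* Gate count of the recursive scheme on a block of size 2^j: two restriction
   steps on the whole block, then the two half blocks. *)
Fixpoint split_cost (p j : nat) : nat :=
  if j is j'.+1 then 2 * binom_down (2 ^ j) p + 2 * split_cost p j' else 0.

Fixpoint level_cost (k j : nat) : nat :=
  if j is j'.+1 then 2 * 'C(2 ^ j, k) + 2 * level_cost k j' else 0.

Lemma split_cost_levels p j : split_cost p j = \sum_(k < p.+1) level_cost k j.
Proof.
elim: j => [|j IH] /=; first by rewrite big1.
by rewrite IH /binom_down !big_distrr -big_split.
Qed.

Lemma level_cost0 j : level_cost 0 j + 2 <= 2 * 2 ^ j.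
Proof. by elim: j => [|j IH] //=; rewrite bin0 expnS; lia. Qed.

Lemma level_cost1 j : level_cost 1 j <= 2 * j * 2 ^ j.
Proof. by elim: j => [|j IH] //=; rewrite bin1 expnS; nia. Qed.

Lemma bin_double m k : 4 * 'C(m, k.+2) <= 'C(2 * m, k.+2).
Proof.
have ffact_double i : 2 ^ i * m ^_ i <= (2 * m) ^_ i.
  elim: i => [|i IH]; first by rewrite !ffactn0.
  rewrite !ffactnSr expnS (leq_trans (_ : _ <= 2 ^ i * m ^_ i * (2 * (m - i)))); nia.
rewrite -(leq_pmul2r (fact_gt0 k.+2)) -mulnA !bin_ffact (leq_trans _ (ffact_double _)) //.
by rewrite leq_mul2r !expnS mulnA leq_pmulr ?expn_gt0 ?orbT.
Qed.

(* Hence the levels k >= 2 form a geometric series dominated by its last term. *)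
Lemma level_cost_ge2 k j : level_cost k.+2 j <= 4 * 'C(2 ^ j, k.+2).
Proof.
elim: j => [|j IH] //=.
by have := bin_double (2 ^ j) k; rewrite -expnS; lia.
Qed.

(* Separating the levels 0 and 1, which are not geometric. *)
Lemma binom_down_split m p : binom_down m p.+2 = 1 + m + \sum_(k < p.+1) 'C(m, k.+2).
Proof. by rewrite /binom_down !big_ord_recl bin0 bin1 addnA. Qed.

Lemma split_cost_split p j :
  split_cost p.+2 j = level_cost 0 j + level_cost 1 j + \sum_(k < p.+1) level_cost k.+2 j.
Proof. by rewrite split_cost_levels !big_ord_recl addnA. Qed.

Lemma split_cost_bound p j : 2 <= p -> split_cost p j <= 8 * binom_down (2 ^ j) p.
Proof.
case: p => [|[|p]] // _; rewrite split_cost_split binom_down_split.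
have high : \sum_(k < p.+1) level_cost k.+2 j <= 4 * \sum_(k < p.+1) 'C(2 ^ j, k.+2).
  by rewrite big_distrr; apply: leq_sum => k _; exact: level_cost_ge2.
have bin2_le : 'C(2 ^ j, 2) <= \sum_(k < p.+1) 'C(2 ^ j, k.+2).
  by rewrite (bigD1 ord0) //= leq_addr.
have bin2_pow : 'C(2 ^ j, 2) * 2 = 2 ^ j * (2 ^ j - 1).
  by have := bin_ffact (2 ^ j) 2; rewrite ffactnSr ffactn1.
have j_small : j * 2 ^ j <= 2 * 'C(2 ^ j, 2) by have := ltn_expl j (isT : 1 < 2); nia.
by have := level_cost0 j; have := level_cost1 j; lia.
Qed.

End Cost.

Section Recursion.
Variables (n p : nat).
Implicit Types (D DL DR : {set 'I_n}) (G : {set 'I_n} -> nat) (gs : seq (gate n)).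

Definition traces_computed D G gs : Prop :=
  forall A, A \in family_in p D -> computes gs (G A) (trace_sum p D A).

Lemma traces_computed_ext D G gs gs' c :
  Ext p gs gs' c -> traces_computed D G gs -> traces_computed D G gs'.
Proof. by move=> E trG A fam_A; apply: computes_ext E (trG A fam_A). Qed.

Lemma restrict_traces DL DR G gs : [disjoint DL & DR] ->
  traces_computed (DL :|: DR) G gs ->
  exists gs' GL, Ext p gs gs' (binom_down #|DL :|: DR| p) /\ traces_computed DL GL gs'.
Proof.
move=> dis trG.
have [|gs' [GL [E compL]]] := @each_key n p _ (enum (family_in p DL)) (trace_sum p DL)
    (fun A => #|extensions p DR A|) gs.
  move=> gs1 c A; rewrite mem_enum inE => /andP [sA _] E1.
  have [|gs2 [k [E2 comp_k]]] := @sum_gates n p _ [seq A :|: B | B <- enum (extensions p DR A)]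
      G (trace_sum p (DL :|: DR)) gs1.
    move=> X /mapP [B]; rewrite mem_enum inE => /andP [sB le_AB] ->.
    by apply: computes_ext E1 (trG _ _); rewrite inE setUSS.
  exists gs2, k; split; first by rewrite size_map -cardE in E2.
  by apply: computes_eq comp_k => S f; rewrite big_map big_enum (trace_sum_split _ _ dis sA).
exists gs', GL; split; last by move=> A fam_A; apply: compL; rewrite mem_enum.
by rewrite big_enum /= card_family_split // card_family_in in E.
Qed.

Lemma avoid_sums_block j D G gs : #|D| = (2 ^ j)%N -> traces_computed D G gs ->
  exists gs' (out : 'I_n -> nat), Ext p gs gs' (split_cost p j) /\
    forall y, y \in D -> computes gs' (out y) (avoid_sum p y).
Proof.
elim: j D G gs => [|j IH] D G gs card_D trG.
  have /cards1P [y0 defD] : #|D| == 1%N by rewrite card_D.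
  exists gs, (fun _ => G set0); split=> [|y]; first exact: Ext_refl.
  rewrite defD inE => /eqP ->; rewrite defD in trG.
  apply: computes_eq (trG set0 _) => [S f|]; first exact: trace_sum_set1.
  by rewrite inE sub0set cards0.
have [DL [DR [dis defD card_L card_R]]] := @halve_set _ D (2 ^ j) (etrans card_D (expnS 2 j)).
rewrite defD in trG.
have [gs1 [GL [E1 trL]]] := restrict_traces dis trG.
have [||gs2 [GR [E2 trR]]] := @restrict_traces DR DL G gs1.
- by rewrite disjoint_sym.
- by rewrite setUC; apply: traces_computed_ext E1 trG.
have [gs3 [outL [E3 compL]]] := IH DL GL gs2 card_L (traces_computed_ext E2 trL).
have [gs4 [outR [E4 compR]]] := IH DR GR gs3 card_R (traces_computed_ext E3 trR).
exists gs4, (fun y => if y \in DL then outL y else outR y); split.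
  apply: Ext_trans E1 (Ext_trans E2 (Ext_trans E3 E4 (leqnn _)) (leqnn _)) _.
  by rewrite [DR :|: DL]setUC -defD card_D /=; lia.
move=> y; case: ifP => [L_y _ | L'y]; first exact: computes_ext E4 (compL y L_y).
by rewrite defD inE L'y => /compR.
Qed.

End Recursion.

(* The case p >= 2: input gates for the whole family, whose trace sums on the
   full ground set are the inputs themselves, then the recursion. *)
Lemma avoid_sums_ge2 b p : (2 <= p)%N ->
  exists gs (out : 'I_(2 ^ b) -> nat), Ext p [::] gs (8 * binom_down (2 ^ b) p) /\
    forall y, computes gs (out y) (avoid_sum p y).
Proof.
move=> p_ge2; set l := enum (family_in p [set: 'I_(2 ^ b)]).
have [|E0 comp_in] := @input_layer _ p l.
  by move=> X; rewrite mem_enum inE => /andP [].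
have trT : traces_computed p [set: 'I_(2 ^ b)] (index^~ l) (map (@GIn _) l).
  move=> A fam_A; have l_A : A \in l by rewrite mem_enum.
  apply: computes_eq (comp_in A l_A) => S f; rewrite trace_sum_setT //.
  by move: fam_A; rewrite inE => /andP [].
have [|gs [out [E comp_out]]] := avoid_sums_block (j := b) _ trT.
  by rewrite cardsT card_ord.
exists gs, out; split=> [|y]; last exact: comp_out.
by apply: Ext_trans E0 E _; rewrite add0n split_cost_bound.
Qed.

Lemma big_seq_neq (T : eqType) (S : nmodType) (s : seq T) x0 i (F : T -> S) :
  uniq s -> (i < size s)%N ->
  \sum_(x <- s | x != nth x0 s i) F x =
  \sum_(x <- take i s) F x + \sum_(x <- drop i.+1 s) F x.
Proof.
move=> uniq_s lt_i; set y := nth x0 s i.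
have def_s : s = take i s ++ y :: drop i.+1 s by rewrite -drop_nth ?cat_take_drop.
have drop_y t : y \notin t -> \sum_(x <- t | x != y) F x = \sum_(x <- t) F x.
  move=> y_t; rewrite big_seq_cond [RHS]big_seq_cond; apply: eq_bigl => x.
  by case: (boolP (x \in t)) => //= t_x; apply: contraNneq y_t => <-.
move: uniq_s; rewrite {1}def_s cat_uniq /= negb_or => /and3P [_ /andP [y_take _] /andP [y_drop _]].
by rewrite {1}def_s big_cat big_cons eqxx /= !drop_y.
Qed.

Lemma avoid_sum_p1 n (y : 'I_n) (S : nmodType) (f : {set 'I_n} -> S) :
  avoid_sum 1 y S f =
  f set0 + \sum_(x <- take y (enum 'I_n)) f [set x] + \sum_(x <- drop y.+1 (enum 'I_n)) f [set x].
Proof.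
rewrite -addrA -(@big_seq_neq _ _ _ y y (fun x => f [set x]) (enum_uniq 'I_n)) ?size_enum_ord //.
rewrite nth_ord_enum.
rewrite /avoid_sum (bigD1 set0) /=; last by rewrite /in_family cards0 in_set0.
congr (_ + _); rewrite big_enum_cond -(big_imset _ (in2W set1_inj)) /=.
apply: eq_bigl => X; apply/idP/imsetP => [/andP [/andP [fam_X y_X] X_0] | [x x_y ->]].
  have /cards1P [x defX] : #|X| == 1%N by rewrite eqn_leq lt0n cards_eq0 X_0 andbT.
  by exists x => //; apply: contraNneq y_X => <-; rewrite defX set11.
have neq_xy : x != y := x_y.
rewrite /in_family cards1 in_set1 eq_sym neq_xy /=.
by apply/set0Pn; exists x; rewrite set11.
Qed.

(* The case p = 1, with 3n additions: running sums from the left starting at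
   f set0, running sums from the right, and one addition per output. *)
Lemma avoid_sums_p1 n : exists gs (out : 'I_n -> nat),
  Ext 1 [::] gs (3 * n) /\ forall y, computes gs (out y) (avoid_sum 1 y).
Proof.
set l := enum (family_in 1 [set: 'I_n]).
have [|E0 comp_in] := @input_layer n 1 l.
  by move=> X; rewrite mem_enum inE => /andP [].
have l_set1 (x : 'I_n) : [set x] \in l by rewrite mem_enum inE subsetT cards1.
have l_set0 : set0 \in l by rewrite mem_enum inE subsetT cards0.
set xs := enum 'I_n.
have size_xs : size xs = n by rewrite size_enum_ord.
have [|gs1 [P [E1 compP]]] := prefix_sums 1 (comp_in set0 l_set0) (l := xs)
    (k := fun x => index [set x] l) (F := fun x S f => f [set x]).
  by move=> x _; apply: comp_in (l_set1 x).
have [|gs2 [Q [E2 compQ]]] := suffix_sums 1 (gs := gs1) (l := xs)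
    (k := fun x => index [set x] l) (F := fun x S f => f [set x]).
  by move=> x _; apply: computes_ext E1 (comp_in _ (l_set1 x)).
have [|gs3 [out [E3 comp_out]]] := @each_key n 1 _ xs (avoid_sum 1)
    (fun _ => 1%N) gs2.
  move=> gs c y _ E.
  have [||gs' [k [E' comp_k]]] := add_gate 1 (computes_ext (Ext_trans E2 E (leqnn _)) (compP y _))
      (computes_ext E (compQ y.+1 _)); rewrite ?size_xs //; first exact: ltnW.
  by exists gs', k; split=> //; apply: computes_eq comp_k => S f; rewrite avoid_sum_p1.
exists gs3, out; split=> [|y]; last by apply: comp_out; rewrite mem_enum.
apply: Ext_trans E0 (Ext_trans E1 (Ext_trans E2 E3 (leqnn _)) (leqnn _)) _.
by rewrite sum1_size !size_xs; lia.
Qed.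

Theorem mainTheorem8 :
  exists C : nat, forall b p : nat, (1 <= p)%N ->
    exists c : circuit (2 ^ b),
      circuit_wf p c /\
      (gate_count c <= C * p * binom_down (2 ^ b) p)%N /\
      forall (S : nmodType) (f : {set 'I_(2 ^ b)} -> S) (y : 'I_(2 ^ b)),
        output_value f c y =
        \sum_(X : {set 'I_(2 ^ b)} | in_family p X && (y \notin X)) f X.
Proof.
exists 8%N => b p p_ge1.
have [gs [out [E comp_out]]] : exists gs (out : 'I_(2 ^ b) -> nat),
    Ext p [::] gs (8 * p * binom_down (2 ^ b) p) /\
    forall y, computes gs (out y) (avoid_sum p y).
  case: p p_ge1 => [|[|p]] // _.
    have [gs [out [E comp_out]]] := avoid_sums_p1 (2 ^ b).
    exists gs, out; split=> //; apply: Ext_weaken E _.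
    by rewrite /binom_down big_ord_recl big_ord1 bin0 bin1; lia.
  have [gs [out [E comp_out]]] := @avoid_sums_ge2 b p.+2 isT.
  by exists gs, out; split=> //; apply: Ext_weaken E _; nia.
have [wf_c count_c val_c] := circuit_of E comp_out.
by exists (Circuit gs out); split=> //; split=> // S f y; apply: val_c.
Qed.
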